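(* Let $\mathbb{F}$, $\mathfrak g$, $\mathcal C$, $\mathcal C^{du}$, $M$, $Lie(\cdot)$ be as in the context. The following are equivalent: (i) the pair $\mathcal C,\mathcal C^{du}$ is very good for integrating $\mathfrak g$; (ii) the pair is good for integrating $\mathfrak g$ and $Lie(M^\times)=Lie(M)$; (iii) the pair is good for integrating $\mathfrak g$ and the unit group $M^\times$ is Zariski dense in $M$.
   Context: Let $\mathbb F$ be a field of characteristic $0$, $\mathfrak g$ a Lie algebra over $\mathbb F$. $\mathcal C$: full subcategory of $\mathfrak g$-modules closed under isomorphism and submodules, containing a direct sum and tensor product of any two objects and a one-dimensional trivial module, with only $0\in\mathfrak g$ acting trivially on all objects. $x_V$ = action. Category of duals: point-separating $V^{du}\subseteq V^*$ with $\phi\circ x_V\in V^{du}$ ($x\in\mathfrak g$), $\psi\circ\alpha\in V^{du}$ for morphisms $\alpha:V\to W$, $\psi\in W^{du}$, $(V\oplus W)^{du}=V^{du}\oplus W^{du}$, $V^{du}\otimes W^{du}\subseteq(V\otimes W)^{du}$. $End_{V^{du}}(V)=\{\varphi:\phi\circ\varphi\in V^{du}\ \forall\phi\}$. $Nat$: families $(m_V)_V$, $m_V\in End_{V^{du}}(V)$, commuting with all morphisms. $M=\{m\in Nat:m_{V\otimes W}=m_V\otimes m_W,\ m_{V_0}=id$ for trivial one-dimensional $V_0\}$, $M^\times$ its unit group. $\mathbb F[M]$: the matrix coefficients $f_{\phi v}(m)=\phi(m_Vv)$; Zariski topology on $M$: closed sets are common zero sets of subsets of $\mathbb F[M]$.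 $Lie(M)=\{x\in Nat:x_{V\otimes W}=x_V\otimes id+id\otimes x_W,\ x_{V_0}=0,\ \exists\,\delta_x:\mathbb F[M]\to\mathbb F$ with $\delta_x(f_{\phi v})=\phi(x_Vv)\}$. For a submonoid $N\subseteq M$ with vanishing ideal $I(N)\subseteq\mathbb F[M]$, $Lie(N)=\{x\in Lie(M):\delta_x(I(N))=0\}$. Identify $\mathfrak g$ with $\{(x_V)_V:x\in\mathfrak g\}\subseteq Nat$. Good for integrating: $\mathfrak g\subseteq Lie(M)$; very good: $\mathfrak g\subseteq Lie(M^\times)$. *)

From HB Require Import structures.
From mathcomp Require Import all_boot all_order all_algebra.
Set Implicit Arguments. Unset Strict Implicit. Unset Printing Implicit Defensive.
Import Order.TTheory GRing.Theory Num.Theory.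
Local Open Scope ring_scope.

Record lieAlg (F : fieldType) := LieAlg {
  lie_carrier :> lmodType F;
  bracket : lie_carrier -> lie_carrier -> lie_carrier;
  bracket_linl : forall y, linear (bracket ^~ y);
  bracket_linr : forall x, linear (bracket x);
  bracket_alt : forall x, bracket x x = 0;
  bracket_jacobi : forall x y z,
    bracket x (bracket y z) + bracket y (bracket z x) + bracket z (bracket x y) = 0
}.

Record gmod (F : fieldType) (g : lieAlg F) := GMod {
  gcarrier :> lmodType F;
  gact : g -> gcarrier -> gcarrier;
  gact_linl : forall v, linear (gact ^~ v);
  gact_linr : forall x, linear (gact x);
  gact_bracket : forall x y v,
    gact (bracket x y) v = gact x (gact y v) - gact y (gact x v)
}.

Section Modules.
Variables (F : fieldType) (g : lieAlg F).
Local Notation gmod := (gmod g).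

Definition ghom (V W : gmod) (f : V -> W) : Prop :=
  linear f /\ forall (x : g) (v : V), f (gact x v) = gact x (f v).

Definition giso (V W : gmod) : Prop :=
  exists (f : V -> W) (h : W -> V), ghom f /\ ghom h /\ cancel f h /\ cancel h f.

Definition gsub (W V : gmod) : Prop :=
  exists f : W -> V, ghom f /\ injective f.

Definition trivial1 (V0 : gmod) : Prop :=
  (exists v0 : V0, v0 != 0 /\ forall v : V0, exists a : F, v = a *: v0) /\
  forall (x : g) (v : V0), gact x v = 0.

Definition is_dsum (V W S : gmod) (i1 : V -> S) (i2 : W -> S)
    (p1 : S -> V) (p2 : S -> W) : Prop :=
  [/\ ghom i1, ghom i2, ghom p1, ghom p2 &
   [/\ cancel i1 p1, cancel i2 p2, (forall v, p2 (i1 v) = 0),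
       (forall w, p1 (i2 w) = 0) & (forall s, i1 (p1 s) + i2 (p2 s) = s)]].

Definition bilinear_map (V W : lmodType F) (U : lmodType F) (b : V -> W -> U) :=
  (forall w, linear (b ^~ w)) /\ (forall v, linear (b v)).

Definition is_tensor (V W T : gmod) (b : V -> W -> T) : Prop :=
  [/\ bilinear_map b,
      (forall (U : lmodType F) (beta : V -> W -> U), bilinear_map beta ->
         exists h : T -> U, linear h /\ (forall v w, h (b v w) = beta v w) /\
           forall h' : T -> U, linear h' -> (forall v w, h' (b v w) = beta v w) ->
             h' =1 h) &
      forall (x : g) v w, gact x (b v w) = b (gact x v) w + b v (gact x w)].

Definition module_category (C : gmod -> Prop) : Prop :=
  [/\ (forall V W, C V -> giso V W -> C W),
      (forall V W, C V -> gsub W V -> C W),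
      (forall V W, C V -> C W ->
         exists S i1 i2 p1 p2, C S /\ @is_dsum V W S i1 i2 p1 p2),
      (forall V W, C V -> C W -> exists T b, C T /\ @is_tensor V W T b) &
      (exists V0, C V0 /\ trivial1 V0)] /\
  (forall x : g, (forall V, C V -> forall v : V, gact x v = 0) -> x = 0).

(* the category of duals: V^du is given as a predicate on functionals on V *)
Definition dual_category (C : gmod -> Prop) (du : forall V : gmod, (V -> F) -> Prop)
  : Prop :=
  [/\ (forall V, C V ->
        [/\ (forall phi, du V phi -> scalar phi),
            du V (fun _ => 0),
            (forall phi psi, du V phi -> du V psi -> du V (fun v => phi v + psi v)),
            (forall (a : F) phi, du V phi -> du V (fun v => a * phi v)) &
            (forall v : V, (forall phi, du V phi -> phi v = 0) -> v = 0)]),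
      (forall V, C V -> forall (x : g) phi, du V phi -> du V (fun v => phi (gact x v))),
      (forall (V W : gmod) (alpha : V -> W), C V -> C W -> ghom alpha ->
         forall psi, du W psi -> du V (fun v => psi (alpha v))),
      (forall V W S i1 i2 p1 p2, C V -> C W -> C S -> @is_dsum V W S i1 i2 p1 p2 ->
         forall phi : S -> F, du S phi <->
           exists phi1 phi2, [/\ du V phi1, du W phi2 &
              forall s, phi s = phi1 (p1 s) + phi2 (p2 s)]) &
      (forall V W T b, C V -> C W -> C T -> @is_tensor V W T b ->
         forall phi psi, du V phi -> du W psi ->
           exists chi, du T chi /\ forall v w, chi (b v w) = phi v * psi w)].

(* families (m_V)_V of endomorphisms; only their values on objects of C matter *)
Definition family := forall V : gmod, V -> V.

Variables (C : gmod -> Prop) (du : forall V : gmod, (V -> F) -> Prop).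
Arguments du : clear implicits.

Definition End_du (V : gmod) (f : V -> V) : Prop :=
  linear f /\ forall phi, du V phi -> du V (fun v => phi (f v)).

Definition isNat (m : family) : Prop :=
  (forall V, C V -> End_du (m V)) /\
  forall (V W : gmod) (alpha : V -> W), C V -> C W -> ghom alpha ->
    forall v, alpha (m V v) = m W (alpha v).

Definition inM (m : family) : Prop :=
  [/\ isNat m,
      (forall V W T b, C V -> C W -> C T -> @is_tensor V W T b ->
         forall v w, m T (b v w) = b (m V v) (m W w)) &
      (forall V0, C V0 -> trivial1 V0 -> forall v, m V0 v = v)].

Definition unitM (m : family) : Prop :=
  inM m /\ exists m', inM m' /\
    forall V, C V -> cancel (m V) (m' V) /\ cancel (m' V) (m V).

Definition Mpts := {m : family | inM m}.

(* F[M]: matrix coefficients f_{phi v}(m) = phi (m_V v), as functions on M *)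
Definition mcoef (V : gmod) (phi : V -> F) (v : V) : Mpts -> F :=
  fun m => phi (sval m V v).

Definition inFM (f : Mpts -> F) : Prop :=
  exists V phi v, [/\ C V, du V phi & f =1 @mcoef V phi v].

Definition is_delta (x : family) (delta : (Mpts -> F) -> F) : Prop :=
  forall V phi v, C V -> du V phi -> delta (@mcoef V phi v) = phi (x V v).

Definition LieM (x : family) : Prop :=
  [/\ isNat x,
      (forall V W T b, C V -> C W -> C T -> @is_tensor V W T b ->
         forall v w, x T (b v w) = b (x V v) w + b v (x W w)),
      (forall V0, C V0 -> trivial1 V0 -> forall v, x V0 v = 0) &
      exists delta, is_delta x delta].

Definition inI (N : family -> Prop) (f : Mpts -> F) : Prop :=
  inFM f /\ forall m : Mpts, N (sval m) -> f m = 0.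

Definition LieN (N : family -> Prop) (x : family) : Prop :=
  LieM x /\ forall delta, is_delta x delta -> forall f, inI N f -> delta f = 0.

(* N is Zariski dense in M: every Zariski closed subset of M containing N is M *)
Definition zariski_dense (N : family -> Prop) : Prop :=
  forall S : (Mpts -> F) -> Prop, (forall f, S f -> inFM f) ->
    (forall m : Mpts, N (sval m) -> forall f, S f -> f m = 0) ->
    forall m : Mpts, forall f, S f -> f m = 0.

Definition of_g (x : g) : family := fun V => gact x.

Definition good_for_integrating : Prop := forall x : g, LieM (of_g x).
Definition very_good_for_integrating : Prop := forall x : g, LieN unitM (of_g x).

End Modules.

(* (ii) => (i) is immediate, and (iii) => (ii) because when M^x is dense the
   ideal I(M^x) consists of coefficients vanishing on all of M, which every
   delta_x sends to 0.  For (i) => (iii), let f_{phi,v} vanish on M^x.  The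
   w in V with phi (u_V w) = 0 for all units u form a subspace containing v,
   and it is a g-submodule: for such w the coefficient m |-> phi (u_V m_V w)
   lies in I(M^x), and delta_x sends it to phi (u_V (x w)).  Being a submodule,
   it is an object of C, so each m in M preserves it by naturality of m along
   the inclusion; taking u = 1 gives phi (m_V v) = 0. *)

From HB Require Import structures.
From Pilot Require Import Defs.
From mathcomp Require Import all_boot all_order all_algebra.
From mathcomp Require Import boolp.
Import GRing.Theory.
Set Implicit Arguments. Unset Strict Implicit. Unset Printing Implicit Defensive.

Section CommonKernel.
Local Open Scope ring_scope.
Variables (F : fieldType) (V : lmodType F).

Lemma scalar_comp (U : lmodType F) (phi : U -> F) (f : V -> U) :
  scalar phi -> linear f -> scalar (phi \o f).
Proof. by move=> hphi hf a u v /=; rewrite hf hphi. Qed.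

Lemma common_kernel_submod_closed (I : Type) (P : I -> Prop) (phi : I -> V -> F) :
  (forall i, P i -> scalar (phi i)) ->
  submod_closed [pred w | `[< forall i, P i -> phi i w = 0 >]].
Proof.
move=> hphi; split=> [|a u v]; rewrite !inE.
- apply/asboolP => i /hphi phi_lin.
  exact: (GRing.nmod_morphism_semilinear (GRing.semilinear_linear phi_lin)).1.
- move=> /asboolP phi_u /asboolP phi_v; apply/asboolP => i Pi.
  by rewrite hphi // phi_u // phi_v // mulr0 addr0.
Qed.
End CommonKernel.

Section Submodule.
Local Open Scope ring_scope.
Variables (F : fieldType) (g : lieAlg F) (V : gmod g) (S : pred V).
Hypotheses (S_submod : submod_closed S) (S_gstable : forall x w, S w -> S (gact x w)).

Definition submod_carrier := {w : V | S w}.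
HB.instance Definition _ := SubType.copy submod_carrier {w : V | S w}.
HB.instance Definition _ := Choice.copy submod_carrier {w : V | S w}.
HB.instance Definition _ := GRing.SubChoice_isSubLmodule.Build F V S submod_carrier
  (GRing.submod_closed_semi S_submod).

Definition submod_act (x : g) (w : submod_carrier) : submod_carrier :=
  exist _ (gact x (val w)) (S_gstable x (valP w)).

Lemma submod_act_linl w : linear (submod_act ^~ w).
Proof. by move=> a x y; apply: val_inj; apply: gact_linl. Qed.

Lemma submod_act_linr x : linear (submod_act x).
Proof. by move=> a u w; apply: val_inj; apply: gact_linr. Qed.

Lemma submod_act_bracket x y w :
  submod_act (bracket x y) w = submod_act x (submod_act y w) - submod_act y (submod_act x w).
Proof. by apply: val_inj; apply: gact_bracket. Qed.

Definition submodule : gmod g :=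
  GMod submod_act_linl submod_act_linr submod_act_bracket.

Lemma submodule_val_ghom : ghom (val : submodule -> V).
Proof. by split. Qed.

End Submodule.

Section UnitGroup.
Variables (F : fieldType) (g : lieAlg F) (C : gmod g -> Prop)
  (du : forall V : gmod g, (V -> F) -> Prop).

Definition family_id : Defs.family g := fun V v => v.

Definition family_comp (m1 m2 : Defs.family g) : Defs.family g := fun V v => m1 V (m2 V v).

Lemma inM_id : inM C du family_id.
Proof. by split=> //; split=> // V CV; split. Qed.

Lemma inM_End m V : inM C du m -> C V -> End_du du (m V).
Proof. by case=> [[m_End _] _ _]; apply: m_End. Qed.

Lemma inM_comp m1 m2 : inM C du m1 -> inM C du m2 -> inM C du (family_comp m1 m2).
Proof.
move=> [[E1 N1] T1 R1] [[E2 N2] T2 R2]; split; first split.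
- move=> V CV; have [l1 d1] := E1 V CV; have [l2 d2] := E2 V CV.
  by split=> [a u v | phi /d1 /d2]; rewrite /family_comp ?l2 ?l1.
- by move=> V W alpha CV CW alpha_hom v; rewrite /family_comp N1 // N2.
- by move=> V W T b CV CW CT T_tensor v w; rewrite /family_comp T2 // T1.
- by move=> V0 CV0 V0_triv v; rewrite /family_comp R2 // R1.
Qed.

Lemma unitM_id : unitM C du family_id.
Proof. by split; [exact: inM_id | exists family_id; split; [exact: inM_id |]]. Qed.

Lemma unitM_comp m1 m2 : unitM C du m1 -> unitM C du m2 -> unitM C du (family_comp m1 m2).
Proof.
move=> [M1 [m1' [M1' inv1]]] [M2 [m2' [M2' inv2]]]; split; first exact: inM_comp.
exists (family_comp m2' m1'); split; first exact: inM_comp.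
move=> V CV; have [c1 c1'] := inv1 V CV; have [c2 c2'] := inv2 V CV.
by split=> v; rewrite /family_comp ?c1 ?c2 ?c1' ?c2'.
Qed.

End UnitGroup.

Section Integration.
Local Open Scope ring_scope.
Variables (F : fieldType) (g : lieAlg F) (C : gmod g -> Prop)
  (du : forall V : gmod g, (V -> F) -> Prop).
Arguments du : clear implicits.
Hypotheses (hC : module_category C) (hdu : dual_category C du).

Lemma isNat_submodule_stable m (V : gmod g) (S : pred V) (S_submod : submod_closed S)
    (S_gstable : forall x w, S w -> S (gact x w)) w :
  isNat C du m -> C V -> S w -> S (m V w).
Proof.
move=> [_ m_nat] CV Sw.
have [[_ C_sub _ _ _] _] := hC.
have C_S : C (submodule S_submod S_gstable).
  by apply: C_sub CV _; exists val; split; [exact: submodule_val_ghom | exact: val_inj].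
have := valP (m _ (exist _ w Sw : submodule S_submod S_gstable)).
by rewrite (m_nat _ _ _ C_S CV (submodule_val_ghom S_submod S_gstable)).
Qed.

Lemma zariski_denseP (N : Defs.family g -> Prop) :
  zariski_dense C du N <-> forall f : Mpts C du -> F, inI N f -> forall m, f m = 0.
Proof.
split=> [dense f [f_FM f_van] m | van S S_FM S_van m f Sf].
- by apply: (dense (fun h => h = f)) => // [h -> | m' Nm' h ->] //; apply: f_van.
- by apply: van; split=> [|m' Nm']; [apply: S_FM | apply: S_van].
Qed.

Lemma zariski_dense_LieN_LieM (N : Defs.family g -> Prop) :
  zariski_dense C du N -> forall x, LieN C du N x <-> LieM C du x.
Proof.
move=> /zariski_denseP N_dense x; split=> [[]//|x_Lie]; split=> // delta delta_x f f_I.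
have [[V [_ [v [CV _ _]]]] _] := f_I.
have [du_subspace _ _ _ _] := hdu; have [_ du0 _ _ _] := du_subspace V CV.
have -> : f = mcoef (fun _ : V => 0) v by apply: funext => m; rewrite N_dense.
by rewrite delta_x.
Qed.

Definition unit_annihilator (V : gmod g) (phi : V -> F) : pred V :=
  fun w => `[< forall u, unitM C du u -> phi (u V w) = 0 >].

Lemma unit_annihilator_submod_closed V phi :
  C V -> du V phi -> submod_closed (unit_annihilator phi).
Proof.
move=> CV du_phi; have [du_subspace _ _ _ _] := hdu.
have [phi_scalar _ _ _ _] := du_subspace V CV.
apply: (@common_kernel_submod_closed _ _ _ _ (fun u w => phi (u V w))) => u u_unit.
by apply: scalar_comp; [exact: phi_scalar | case: (inM_End u_unit.1 CV)].
Qed.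

Lemma unit_annihilator_gstable V phi :
  very_good_for_integrating C du -> C V -> du V phi ->
  forall x w, unit_annihilator phi w -> unit_annihilator phi (gact x w).
Proof.
move=> vg CV du_phi x w /asboolP w_ann; apply/asboolP => u u_unit.
have [_ u_du] := inM_End u_unit.1 CV.
have [[_ _ _ [delta delta_x]] x_LieN] := vg x.
have f_I : inI (unitM C du) (mcoef (C:=C) (du:=du) (fun w => phi (u V w)) w).
  split; first by exists V, (fun w => phi (u V w)), w; split=> //; exact: u_du.
  by move=> m m_unit; apply: (w_ann (family_comp u (sval m))); apply: unitM_comp.
by rewrite -(delta_x V _ w CV (u_du _ du_phi)); apply: x_LieN.
Qed.

Lemma very_good_zariski_dense :
  very_good_for_integrating C du -> zariski_dense C du (unitM C du).
Proof.
move=> vg; apply/zariski_denseP => f [[V [phi [v [CV du_phi f_eq]]]] f_van] m.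
have v_ann : unit_annihilator phi v.
  apply/asboolP => u u_unit.
  by have := f_van (exist _ u u_unit.1) u_unit; rewrite f_eq.
have [m_nat _ _] := svalP m.
have := isNat_submodule_stable (unit_annihilator_submod_closed CV du_phi)
  (unit_annihilator_gstable vg CV du_phi) m_nat CV v_ann.
by move=> /asboolP /(_ _ (unitM_id C du)); rewrite f_eq.
Qed.

Lemma very_good_good :
  very_good_for_integrating C du -> good_for_integrating C du.
Proof. by move=> vg x; case: (vg x). Qed.

Lemma good_LieN_very_good :
  good_for_integrating C du ->
  (forall x, LieN C du (unitM C du) x <-> LieM C du x) ->
  very_good_for_integrating C du.
Proof. by move=> gd LieN_LieM x; apply/LieN_LieM. Qed.

End Integration.

Unset Implicit Arguments.

Theorem proposition2p9 (F : fieldType) (hF : [pchar F]%R =i pred0) (g : lieAlg F)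
    (C : gmod g -> Prop) (du : forall V : gmod g, (V -> F) -> Prop)
    (hC : module_category C) (hdu : dual_category C du) :
  [/\ (very_good_for_integrating C du <->
         good_for_integrating C du /\
         (forall x, LieN C du (unitM C du) x <-> LieM C du x)),
      (very_good_for_integrating C du <->
         good_for_integrating C du /\ zariski_dense C du (unitM C du)) &
      (good_for_integrating C du /\
         (forall x, LieN C du (unitM C du) x <-> LieM C du x) <->
       good_for_integrating C du /\ zariski_dense C du (unitM C du))].
Proof.
have dense_LieN_LieM := @zariski_dense_LieN_LieM F g C du hdu (unitM C du).
have very_good_dense := very_good_zariski_dense hC hdu.
split; split.
- move=> vg; split; first exact: very_good_good.
  by apply: dense_LieN_LieM; apply: very_good_dense.
- by case; apply: good_LieN_very_good.
- by move=> vg; split; [exact: very_good_good | exact: very_good_dense].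
- by case=> gd /dense_LieN_LieM; apply: good_LieN_very_good.
- by case=> gd /(good_LieN_very_good gd) /very_good_dense.
- by case=> gd /dense_LieN_LieM.
Qed.
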